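(* Let $L=K_1\cup\dots\cup K_n$ be an oriented, ordered link with a surface system $\Sigma$. Let $\{b_K\}$ and $\{b_K'\}$ be two collections of base points, one on each component $K$ of $L$ (away from the intersection points of $K$ with the other surfaces), and let $m,m'\in W$ be the associated elements. Then \[m'-m\in\operatorname{span}\{v_{s,r}\mid s\neq r\},\qquad v_{s,r}=\sum_{i=1}^n\operatorname{lk}(K_i,K_r)X^{[isr]}.\]
   Context: A surface system for $L$ is a collection of embedded compact oriented surfaces $\Sigma_i\subset S^3$ with $\partial\Sigma_i=K_i$, intersecting transversally and in at most triple points. Given base points, $\widetilde w_k$ is the word in letters $\{1,\dots,n\}\times\{\pm1\}$ obtained by reading, along $K_k$ in the positive direction from its base point, the letter $i^{\varepsilon}$ for each intersection point of $K_k$ with $\Sigma_i$ ($i\ne k$), $\varepsilon$ the intersection sign. For $w=s_1^{\varepsilon_1}\cdots s_m^{\varepsilon_m}$, $e_{rs}(w)=\sum_{p<q,\,s_p=r,\,s_q=s}\varepsilon_p\varepsilon_q$. For distinct $i,j,k$, $m_{ijk}=e_{ij}(\widetilde w_k)+e_{jk}(\widetilde w_i)+e_{ki}(\widetilde w_j)$. $W=\bigwedge^3\mathbb{Z}\langle X^1,\dots,X^n\rangle$, $X^{[ijk]}=X^i\wedge X^j\wedge X^k$, and $m=\sum_{i<j<k}m_{ijk}X^{[ijk]}$ (similarly $m'$). *)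

From mathcomp Require Import all_boot all_order all_algebra.
Set Implicit Arguments. Unset Strict Implicit. Unset Printing Implicit Defensive.
Import GRing.Theory Num.Theory.
Local Open Scope ring_scope.

(* A letter i^eps : component index i and sign eps (true = +1, false = -1). *)
Definition letter (n : nat) := ('I_n * bool)%type.
Definition lsign (b : bool) : int := if b then 1 else -1.

Definition e_word n (r s : 'I_n) (w : seq (letter n)) : int :=
  let t := in_tuple w in
  \sum_(p < size w) \sum_(q < size w | (p < q)%N)
     (if ((tnth t p).1 == r) && ((tnth t q).1 == s)
      then lsign (tnth t p).2 * lsign (tnth t q).2 else 0).

Definition mu n (w : 'I_n -> seq (letter n)) (i j k : 'I_n) : int :=
  e_word i j (w k) + e_word j k (w i) + e_word k i (w j).

(* W = /\^3 Z<X^1..X^n>, represented by its coordinates on the basis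
   X^[abc], a<b<c; coordinates at non-increasing triples are 0. *)
Definition triple n := ('I_n * 'I_n * 'I_n)%type.
Notation W n := {ffun triple n -> int}.
Definition incr n (t : triple n) : bool :=
  ((t.1.1 < t.1.2)%N && (t.1.2 < t.2)%N).

(* X^i /\ X^j /\ X^k for arbitrary i j k : coordinate on X^[abc] is the
   3x3 minor det [delta_{x,y}]_{x in (i,j,k), y in (a,b,c)}. *)
Definition wedge3 n (i j k : 'I_n) : W n :=
  [ffun t : triple n =>
     if incr t then
       let x := [:: i; j; k] in
       let y := [:: t.1.1; t.1.2; t.2] in
       \det (\matrix_(p < 3, q < 3)
               ((nth i x p == nth i y q)%:R : int))
     else 0].

Definition melt n (w : 'I_n -> seq (letter n)) : W n :=
  [ffun t : triple n => if incr t then mu w t.1.1 t.1.2 t.2 else 0].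

Definition vsr n (lk : 'I_n -> 'I_n -> int) (s r : 'I_n) : W n :=
  \sum_(i < n) wedge3 i s r *~ lk i r.

Definition scount n (i : 'I_n) (w : seq (letter n)) : int :=
  \sum_(x <- w | x.1 == i) lsign x.2.

From mathcomp Require Import all_boot all_order all_algebra ring.
Import GRing.Theory Num.Theory.
Local Open Scope ring_scope.
Set Implicit Arguments. Unset Strict Implicit. Unset Printing Implicit Defensive.

(* Moving the base point of K_r turns its word u ++ v into v ++ u, and this
   changes e_{is}(w_r) by scount_i(w_r) scount_s(u) - scount_i(u) scount_s(w_r),
   i.e. by lk(i,r) P_s(r) - P_i(r) lk(s,r) with P_s(r) := scount_s(u).
   Summing the three cyclic terms of m_{abc} gives the antisymmetrization of
   H(i,s,r) := lk(i,r) P_s(r) at (a,b,c), so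
   m' - m = sum_{i,s,r} H(i,s,r) X^i /\ X^s /\ X^r = sum_{s<>r} P_s(r) v_{s,r},
   the terms with s = r vanishing since X^s /\ X^s = 0. *)

Section Words.
Variable n : nat.
Implicit Types (r s : 'I_n) (x : letter n) (u v w : seq (letter n)).

Lemma scount_cons s x u :
  scount s (x :: u) = (if x.1 == s then lsign x.2 else 0) + scount s u.
Proof. by rewrite /scount big_cons; case: ifP; rewrite ?add0r. Qed.

Lemma scount_cat s u v : scount s (u ++ v) = scount s u + scount s v.
Proof. by rewrite /scount big_cat. Qed.

Lemma e_word_nth r s w x0 : e_word r s w =
  \sum_(p < size w) \sum_(q < size w | (p < q)%N)
    (if ((nth x0 w p).1 == r) && ((nth x0 w q).1 == s)
     then lsign (nth x0 w p).2 * lsign (nth x0 w q).2 else 0).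
Proof. by apply: eq_bigr => p _; apply: eq_bigr => q _; rewrite !(tnth_nth x0). Qed.

Lemma e_word_nil r s : e_word r s [::] = 0.
Proof. by rewrite /e_word big_ord0. Qed.

Lemma e_word_cons r s x u : e_word r s (x :: u) =
  (if x.1 == r then lsign x.2 * scount s u else 0) + e_word r s u.
Proof.
rewrite !(e_word_nth _ _ _ x) /= big_ord_recl; congr (_ + _).
  rewrite big_mkcond big_ord_recl /= add0r /scount (big_nth x) big_mkord big_mkcond.
  case: ifP => [xr | _]; last by rewrite big1.
  rewrite mulr_sumr [RHS]big_mkcond; apply: eq_bigr => q _ /=.
  by case: ifP; rewrite ?mulr0.
apply: eq_bigr => p _; rewrite big_mkcond big_ord_recl [RHS]big_mkcond /= add0r.
by apply: eq_bigr => q _; rewrite /bump /= !add1n ltnS.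
Qed.

Lemma e_word_cat r s u v : e_word r s (u ++ v) =
  e_word r s u + e_word r s v + scount r u * scount s v.
Proof.
elim: u => [|x u IH] /=; first by rewrite e_word_nil /scount big_nil mul0r add0r addr0.
by rewrite !e_word_cons IH scount_cat scount_cons; case: ifP => _; ring.
Qed.

Lemma e_word_rot r s t w : e_word r s (rot t w) = e_word r s w
  + scount r w * scount s (take t w) - scount r (take t w) * scount s w.
Proof.
rewrite /rot; move: (cat_take_drop t w); set u := take t w; set v := drop t w.
by move=> <-; rewrite !e_word_cat !scount_cat; ring.
Qed.

End Words.

Section Antisymmetrization.
Variables (T : Type) (V : zmodType).

Definition antisym3 (F : T -> T -> T -> V) x y z : V :=
  F x y z - F x z y - F y x z + F y z x + F z x y - F z y x.

Lemma antisym3_sum (I : finType) (F : I -> T -> T -> T -> V) x y z :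
  \sum_i antisym3 (F i) x y z = antisym3 (fun a b c => \sum_i F i a b c) x y z.
Proof. by rewrite !(sumrB, big_split). Qed.

Lemma antisym3_sym23 (F : T -> T -> T -> V) x y z :
  (forall a b c, F a b c = F a c b) -> antisym3 F x y z = 0.
Proof.
move=> FC; rewrite /antisym3 (FC x z) (FC y z) (FC z y) subrr sub0r addNr add0r.
exact: subrr.
Qed.

End Antisymmetrization.

Lemma antisym3_mulr T (R : comNzRingType) (F : T -> T -> T -> R) h x y z :
  antisym3 F x y z * h = antisym3 (fun a b c => F a b c * h) x y z.
Proof. by rewrite /antisym3 !(mulrBl, mulrDl). Qed.

Lemma det_mx33 (R : comNzRingType) (f : nat -> nat -> R) :
  \det (\matrix_(p < 3, q < 3) f p q) =
  f 0 0 * f 1 1 * f 2 2 - f 0 0 * f 1 2 * f 2 1 - f 0 1 * f 1 0 * f 2 2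
  + f 0 1 * f 1 2 * f 2 0 + f 0 2 * f 1 0 * f 2 1 - f 0 2 * f 1 1 * f 2 0.
Proof.
do 3!rewrite !(expand_det_row _ ord0) !big_ord_recl !big_ord0 /cofactor.
by rewrite !det_mx00 !mxE /= !expr0 !expr1 !exprS !expr0 /bump /=; ring.
Qed.

Section Wedge.
Variable n : nat.
Implicit Types (i j k x y z : 'I_n) (t : triple n).

Definition delta3 i j k x y z : int := (i == x)%:R * (j == y)%:R * (k == z)%:R.

Lemma sum_delta x (F : 'I_n -> int) : \sum_i (i == x)%:R * F i = F x.
Proof.
under eq_bigr => i _ do rewrite mulr_natl mulrb.
by rewrite -big_mkcond big_pred1_eq.
Qed.

Lemma sum_delta3 (H : 'I_n -> 'I_n -> 'I_n -> int) x y z :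
  \sum_i \sum_j \sum_k delta3 i j k x y z * H i j k = H x y z.
Proof.
rewrite -(sum_delta x (fun i => H i y z)); apply: eq_bigr => i _.
rewrite -(sum_delta y (fun j => H i j z)) mulr_sumr; apply: eq_bigr => j _.
rewrite -(sum_delta z (H i j)) !mulr_sumr; apply: eq_bigr => k _.
by rewrite /delta3 !mulrA.
Qed.

Lemma wedge3E i j k t : incr t ->
  wedge3 i j k t = antisym3 (delta3 i j k) t.1.1 t.1.2 t.2.
Proof.
move=> tI; rewrite ffunE tI.
exact: (det_mx33 (fun p q =>
  (nth i [:: i; j; k] p == nth i [:: t.1.1; t.1.2; t.2] q)%:R)).
Qed.

Lemma wedge3_diag i j : wedge3 i j j = 0.
Proof.
apply/ffunP => t; rewrite [RHS]ffunE; have [tI | tN] := boolP (incr t).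
  rewrite wedge3E // antisym3_sym23 // => a b c.
  by rewrite /delta3 mulrAC.
by rewrite ffunE (negbTE tN).
Qed.

Definition wedge_sum (H : 'I_n -> 'I_n -> 'I_n -> int) : W n :=
  \sum_i \sum_j \sum_k wedge3 i j k *~ H i j k.

Lemma wedge_sum_coord H t :
  wedge_sum H t = \sum_i \sum_j \sum_k wedge3 i j k t * H i j k.
Proof.
rewrite sum_ffunE; apply: eq_bigr => i _; rewrite sum_ffunE; apply: eq_bigr => j _.
by rewrite sum_ffunE; apply: eq_bigr => k _; rewrite ffunMzE mulrzz.
Qed.

Lemma wedge_sumE H t :
  wedge_sum H t = if incr t then antisym3 H t.1.1 t.1.2 t.2 else 0.
Proof.
rewrite wedge_sum_coord; case: ifP => tI; last first.
  rewrite big1 // => i _; rewrite big1 // => j _; rewrite big1 // => k _.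
  by rewrite ffunE tI mul0r.
under eq_bigr => i _ do under eq_bigr => j _ do under eq_bigr => k _ do
  rewrite wedge3E // antisym3_mulr.
under eq_bigr => i _ do (under eq_bigr => j _ do rewrite antisym3_sum; rewrite antisym3_sum).
by rewrite antisym3_sum /antisym3 !sum_delta3.
Qed.

Lemma sum_vsr (lk c : 'I_n -> 'I_n -> int) :
  \sum_s \sum_(r | s != r) vsr lk s r *~ c s r =
  wedge_sum (fun i s r => lk i r * c s r).
Proof.
rewrite /wedge_sum [RHS]exchange_big; apply: eq_bigr => s _.
rewrite [RHS]exchange_big big_mkcond; apply: eq_bigr => r _ /=.
case: eqP => [<- | _]; first by rewrite big1 // => i _; rewrite wedge3_diag mul0rz.
by rewrite /vsr mulrz_suml; apply: eq_bigr => i _; rewrite mulrzA.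
Qed.

End Wedge.

Section Rotation.
Variables (n : nat) (w w' : 'I_n -> seq (letter n)) (lk : 'I_n -> 'I_n -> int).
Variable t : 'I_n -> nat.
Hypothesis w'E : forall k, w' k = rot (t k) (w k).
Hypothesis lkE : forall i r, i != r -> lk i r = scount i (w r).

Let P s r := scount s (take (t r) (w r)).

Lemma mu_rot (a b c : 'I_n) : (a < b < c)%N ->
  mu w' a b c - mu w a b c = antisym3 (fun i s r => lk i r * P s r) a b c.
Proof.
case/andP=> ab bc; have ac := ltn_trans ab bc.
have neq x y : (x < y)%N -> x != y /\ y != x.
  by move=> xy; split; apply/eqP => xyE; rewrite xyE ltnn in xy.
have [ab1 ab2] := neq _ _ ab; have [bc1 bc2] := neq _ _ bc; have [ac1 ac2] := neq _ _ ac.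
rewrite /mu /P !w'E !e_word_rot.
rewrite -(lkE ab1) -(lkE ab2) -(lkE bc1) -(lkE bc2) -(lkE ac1) -(lkE ac2) /antisym3.
ring.
Qed.

Lemma melt_rot :
  melt w' - melt w = wedge_sum (fun i s r => lk i r * P s r).
Proof.
apply/ffunP => -[[a b] c]; rewrite wedge_sumE !ffunE.
by case: ifP => [/mu_rot | _]; rewrite ?subrr.
Qed.

End Rotation.

Theorem lemma5p6 (n : nat)
  (w w' : 'I_n -> seq (letter n))   (* words from base points b_K, b'_K *)
  (lk : 'I_n -> 'I_n -> int)        (* linking numbers lk(K_i, K_r) *)
  (Hnoself : forall k x, x \in w k -> x.1 != k)
  (Hlk : forall i r, i != r -> lk i r = scount i (w r))
  (Hlksym : forall i r, i != r -> lk i r = lk r i)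
  (Hrot : forall k, exists t, w' k = rot t (w k)) :
  exists c : 'I_n -> 'I_n -> int,
    melt w' - melt w = \sum_(s < n) \sum_(r < n | s != r) vsr lk s r *~ c s r.
Proof.
have [t w'E] := fin_all_exists Hrot.
exists (fun s r => scount s (take (t r) (w r))).
by rewrite sum_vsr (melt_rot w'E Hlk).
Qed.
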